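(* Every HW-matrix $A\in\mathcal S^{n\times n}$ has odd degree $n$.
   Context: $\mathcal S=\{0,1,2,3\}$ is the Klein four-group ($\mathbb Z_2$-vector space) with $x+x=0$, $1+2=3$, $1+3=2$, $2+3=1$. A square matrix over $\mathcal S$ is distinguished if it has $1$ on the diagonal and $2$ or $3$ in every off-diagonal entry. $\mathcal P_n$ denotes the power set of $\{1,\dots,n\}$, a $\mathbb Z_2$-algebra with symmetric difference as addition and intersection as multiplication, $0=\emptyset$, $1=\{1,\dots,n\}$. For $U\in\mathcal P_n$, $c_j^U(A)=\sum_{i\in U}A_{ij}$, $c_j(A)=c_j^{\{1..n\}}(A)$, and $J_A(U)=\{j: c_j^U(A)=1\}$. $A\in\mathcal S^{n\times n}$ is an HW-matrix if (i) $A$ is distinguished, (ii) $c_j(A)=0$ for all $j$, (iii) $J_A(U)\ne\emptyset$ for every $U\in\mathcal P_n\setminus\{\emptyset,\{1,\dots,n\}\}$. *)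

From mathcomp Require Import all_boot all_algebra.
Set Implicit Arguments. Unset Strict Implicit. Unset Printing Implicit Defensive.

(* The Klein four-group S = {0,1,2,3}, encoded as bool * bool with
   componentwise xor:  0 = (F,F), 1 = (T,F), 2 = (F,T), 3 = (T,T).
   Then 1+2 = 3, 1+3 = 2, 2+3 = 1, x+x = 0. *)
Definition S := (bool * bool)%type.
Definition s0 : S := (false, false).
Definition s1 : S := (true, false).
Definition s2 : S := (false, true).
Definition s3 : S := (true, true).
Definition sadd (x y : S) : S := (addb x.1 y.1, addb x.2 y.2).

Definition distinguished n (A : 'M[S]_n) : Prop :=
  forall i j : 'I_n, if i == j then A i j = s1 else (A i j = s2 \/ A i j = s3).

Definition colsumU n (U : {set 'I_n}) (A : 'M[S]_n) (j : 'I_n) : S :=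
  \big[sadd/s0]_(i in U) A i j.

Definition colsum n (A : 'M[S]_n) (j : 'I_n) : S := colsumU setT A j.

Definition JA n (A : 'M[S]_n) (U : {set 'I_n}) : {set 'I_n} :=
  [set j | colsumU U A j == s1].

Definition HW_matrix n (A : 'M[S]_n) : Prop :=
  [/\ distinguished A,
      (forall j, colsum A j = s0) &
      (forall U : {set 'I_n}, U != set0 -> U != setT -> JA A U != set0)].

From mathcomp Require Import all_boot all_algebra.

(* Project the
   Klein four-group S = Z_2 x Z_2 onto its second coordinate: this is a group
   morphism S -> Z_2 sending 1 to 0 and both 2 and 3 to 1.  In a distinguished
   matrix, the projected column j therefore has a 0 exactly on the diagonal and
   1 everywhere else, so the projection of the column sum c_j(A) is the parity
   of n - 1.  Condition (ii) says c_j(A) = 0, hence n - 1 is even and n is odd. *)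

Lemma big_addb_odd (T : finType) (P : pred T) (F : pred T) :
  \big[addb/false]_(i | P i) F i = odd #|[pred i | P i && F i]|.
Proof.
rewrite cardE /enum_mem size_filter [index_enum T]unlock.
elim: (Finite.enum T) => [|x r IH]; first by rewrite big_nil.
by rewrite big_cons /= !inE oddD -IH; case: (P x); case: (F x).
Qed.

Lemma colsumU_snd {n} (U : {set 'I_n}) (A : 'M[S]_n) (j : 'I_n) :
  (colsumU U A j).2 = \big[addb/false]_(i in U) (A i j).2.
Proof. exact: (big_morph snd (id1:=false) (op1:=addb)). Qed.

Lemma distinguished_snd {n} {A : 'M[S]_n} :
  distinguished A -> forall i j : 'I_n, (A i j).2 = (i != j).
Proof. by move=> dA i j; move: (dA i j); case: (i == j) => [-> | [] ->]. Qed.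

Lemma distinguished_colsum_snd {n} {A : 'M[S]_n} (j : 'I_n) :
  distinguished A -> (colsum A j).2 = odd n.-1.
Proof.
move=> dA; rewrite /colsum colsumU_snd.
under eq_bigr => i _ do rewrite (distinguished_snd dA).
rewrite big_addb_odd -[n in n.-1]card_ord -(cardC1 j).
by congr (odd _); apply: eq_card => i; rewrite !inE.
Qed.

Theorem mainTheorem3 (n : nat) (A : 'M[S]_n) :
  (0 < n)%N -> HW_matrix A -> odd n.
Proof.
case: n A => [|n] A // _ [dA colsum0 _].
have := distinguished_colsum_snd ord0 dA.
by rewrite colsum0 /= => <-.
Qed.
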